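(* Let $\bm X\in\mathbb{IR}^n$ and let $(f^{\rm u},f^{\rm o})_{\bm X}$ be a superposition relaxation of $f:\bm X\to\mathbb{R}$ with continuous summands, and suppose $\mathcal P^{\rm u}=\{i:\operatorname{wid}(f^{\rm u}_i(X_i))>0\}$ and $\mathcal P^{\rm o}=\{i:\operatorname{wid}(f^{\rm o}_i(X_i))>0\}$ are nonempty. Let $F=[\underline F,\overline F]\in\mathbb{IR}$ satisfy $f(\bm x)\in F$ for all $\bm x\in\bm X$. With $\theta^{\rm u}_i=\operatorname{wid}(f^{\rm u}_i(X_i))/\operatorname{wid}(f^{\rm u}(\bm X))$ and $\theta^{\rm o}_i=\operatorname{wid}(f^{\rm o}_i(X_i))/\operatorname{wid}(f^{\rm o}(\bm X))$, the summands $$f^{\rm u,ref}_i(x_i)=\max\{f^{\rm u}_i(x_i)-\underline f^{\rm u}_i(X_i)+\underline f^{\rm u}(\bm X),\underline F\}-(1-\theta^{\rm u}_i)\max\{\underline f^{\rm u}(\bm X),\underline F\},\quad i\in\mathcal P^{\rm u},$$ $$f^{\rm o,ref}_i(x_i)=\min\{f^{\rm o}_i(x_i)-\overline f^{\rm o}_i(X_i)+\overline f^{\rm o}(\bm X),\overline F\}-(1-\theta^{\rm o}_i)\min\{\overline f^{\rm o}(\bm X),\overline F\},\quad i\in\mathcal P^{\rm o},$$ with all other summands identically zero, define a superposition relaxation $(f^{\rm u,ref},f^{\rm o,ref})_{\bm X}$ of $f$ on $\bm X$.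
   Context: $\mathbb{IR}$ is the set of compact real intervals and $\mathbb{IR}^n$ the set of boxes $\bm X=X_1\times\cdots\times X_n$. A superposition relaxation of $f:\bm X\to\mathbb{R}$ on $\bm X$ is a pair of separable functions $f^{\rm u}(\bm x)=\sum_i f^{\rm u}_i(x_i)$, $f^{\rm o}(\bm x)=\sum_i f^{\rm o}_i(x_i)$ with $f^{\rm u}_i,f^{\rm o}_i:X_i\to\mathbb{R}$ and $f^{\rm u}\le f\le f^{\rm o}$ on $\bm X$. Notation: $\underline f^{\rm u}_i(X_i)=\min_{X_i}f^{\rm u}_i$, $\overline f^{\rm u}_i(X_i)=\max_{X_i}f^{\rm u}_i$, $\operatorname{wid}(f^{\rm u}_i(X_i))=\overline f^{\rm u}_i(X_i)-\underline f^{\rm u}_i(X_i)$, $\underline f^{\rm u}(\bm X)=\sum_i\underline f^{\rm u}_i(X_i)$, $\overline f^{\rm u}(\bm X)=\sum_i\overline f^{\rm u}_i(X_i)$, $\operatorname{wid}(f^{\rm u}(\bm X))=\overline f^{\rm u}(\bm X)-\underline f^{\rm u}(\bm X)$; likewise for $f^{\rm o}$. *)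

From HB Require Import structures.
From mathcomp Require Import all_boot all_order all_algebra.
From mathcomp Require Import all_classical all_reals all_analysis.
Set Implicit Arguments. Unset Strict Implicit. Unset Printing Implicit Defensive.
Import Order.TTheory GRing.Theory Num.Theory.
Import numFieldNormedType.Exports.
Local Open Scope classical_set_scope.
Local Open Scope ring_scope.

Section Defs.
Variables (R : realType) (n : nat).

Definition in_box (a b : 'I_n -> R) (x : 'I_n -> R) : Prop :=
  forall i, a i <= x i <= b i.

(* min / max of a summand g over the compact interval [a, b]
   (realized as inf / sup of the image; these are attained for continuous g) *)
Definition lo_on (g : R -> R) (a b : R) : R := inf (g @` `[a, b]).
Definition hi_on (g : R -> R) (a b : R) : R := sup (g @` `[a, b]).
Definition wid_on (g : R -> R) (a b : R) : R := hi_on g a b - lo_on g a b.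

Definition lo_sum (g : 'I_n -> R -> R) (a b : 'I_n -> R) : R :=
  \sum_(i < n) lo_on (g i) (a i) (b i).
Definition hi_sum (g : 'I_n -> R -> R) (a b : 'I_n -> R) : R :=
  \sum_(i < n) hi_on (g i) (a i) (b i).
Definition wid_sum (g : 'I_n -> R -> R) (a b : 'I_n -> R) : R :=
  hi_sum g a b - lo_sum g a b.

Definition sep (g : 'I_n -> R -> R) (x : 'I_n -> R) : R :=
  \sum_(i < n) g i (x i).

Definition superposition_relaxation (a b : 'I_n -> R) (f : ('I_n -> R) -> R)
  (fu fo : 'I_n -> R -> R) : Prop :=
  forall x, in_box a b x -> sep fu x <= f x /\ f x <= sep fo x.

Definition fu_ref (a b : 'I_n -> R) (fu : 'I_n -> R -> R) (Flo : R)
  : 'I_n -> R -> R :=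
  fun i t =>
    if 0 < wid_on (fu i) (a i) (b i) then
      Num.max (fu i t - lo_on (fu i) (a i) (b i) + lo_sum fu a b) Flo
      - (1 - wid_on (fu i) (a i) (b i) / wid_sum fu a b)
          * Num.max (lo_sum fu a b) Flo
    else 0.

Definition fo_ref (a b : 'I_n -> R) (fo : 'I_n -> R -> R) (Fhi : R)
  : 'I_n -> R -> R :=
  fun i t =>
    if 0 < wid_on (fo i) (a i) (b i) then
      Num.min (fo i t - hi_on (fo i) (a i) (b i) + hi_sum fo a b) Fhi
      - (1 - wid_on (fo i) (a i) (b i) / wid_sum fo a b)
          * Num.min (hi_sum fo a b) Fhi
    else 0.

End Defs.

From HB Require Import structures.
From mathcomp Require Import all_boot all_order all_algebra.
From mathcomp Require Import all_classical all_reals all_analysis.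
From mathcomp Require Import lra.
Import Order.TTheory GRing.Theory Num.Theory.
Import numFieldNormedType.Exports.
Local Open Scope classical_set_scope.
Local Open Scope ring_scope.

(* Write [f^u(x) = L + sum_i g_i] with [L = lo_sum f^u] and [g_i = f^u_i(x_i) - lo_i >= 0].
   The refined lower summands sum to [sum_i max(L + g_i, F) - (n - 1) max(L, F)], because
   the weights [theta_i] sum to 1.  Since [t |-> max(L + t, F)] is convex, it is
   supermodular on the nonnegative reals, which bounds this sum by [max(f^u(x), F) <= f(x)].
   The upper bound is the same statement for [-f], [-f^o] and [-F]. *)

Lemma maxr_shift_supermodular {R : realDomainType} (L F : R) {p q : R} :
  0 <= p -> 0 <= q ->
  Num.max (L + p) F + Num.max (L + q) F <= Num.max (L + (p + q)) F + Num.max L F.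
Proof.
move=> p_ge0 q_ge0.
by case: (leP (L + p) F); case: (leP (L + q) F); case: (leP (L + (p + q)) F);
  case: (leP L F); lra.
Qed.

Lemma sum_maxr_shift_le {R : realDomainType} {I : Type} (s : seq I) (g : I -> R)
    (L F : R) : (forall i, 0 <= g i) ->
  \sum_(i <- s) Num.max (L + g i) F + Num.max L F <=
  Num.max (L + \sum_(i <- s) g i) F + (size s)%:R * Num.max L F.
Proof.
move=> g_ge0; elim: s => [|i s IHs].
  by rewrite !big_nil addr0 add0r mul0r addr0.
have sum_ge0 : 0 <= \sum_(j <- s) g j by apply: sumr_ge0.
have := maxr_shift_supermodular L F (g_ge0 i) sum_ge0.
rewrite !big_cons /= -natr1 mulrDl mul1r; lra.
Qed.

Lemma continuous_bounded_on {R : realType} {g : R -> R} {a b : R} : a <= b ->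
  {within `[a, b], continuous g} ->
  forall t, a <= t <= b -> lo_on g a b <= g t <= hi_on g a b.
Proof.
move=> ab g_cont t tab.
have t_in : t \in `[a, b] by rewrite in_itv.
have [c _ gc_max] := EVT_max ab g_cont.
have [d _ gd_min] := EVT_min ab g_cont.
apply/andP; split.
- apply: ge_inf; last by exists t.
  by exists (g d) => _ [s s_in <-]; apply: gd_min.
- apply: sup_upper_bound; last by exists t.
  split; first by exists (g t), t.
  by exists (g c) => _ [s s_in <-]; apply: gc_max.
Qed.

Lemma wid_on_ge0 {R : realType} (g : R -> R) (a b : R) : a <= b ->
  (forall t, a <= t <= b -> lo_on g a b <= g t <= hi_on g a b) ->
  0 <= wid_on g a b.
Proof.
move=> ab g_bnd; have /g_bnd/andP[lo_le le_hi] : a <= a <= b by rewrite lexx ab.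
by rewrite subr_ge0 (le_trans lo_le le_hi).
Qed.

Section LowerRefinement.
Local Set Implicit Arguments.
Variables (R : realType) (n : nat) (a b : 'I_n -> R) (fu : 'I_n -> R -> R)
  (Flo : R).
Hypothesis ab : forall i, a i <= b i.
Hypothesis fu_bounded : forall i t, a i <= t <= b i ->
  lo_on (fu i) (a i) (b i) <= fu i t <= hi_on (fu i) (a i) (b i).
Hypothesis wid_fu_gt0 : exists i, 0 < wid_on (fu i) (a i) (b i).

Let lo i := lo_on (fu i) (a i) (b i).
Let w i := wid_on (fu i) (a i) (b i).
Let W := wid_sum fu a b.
Let L := lo_sum fu a b.
Let M := Num.max L Flo.

Let w_ge0 i : 0 <= w i.
Proof. exact: wid_on_ge0 (ab i) (fu_bounded i). Qed.

Let W_sum : W = \sum_i w i.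
Proof. by rewrite /W /w /wid_sum /hi_sum /lo_sum /wid_on sumrB. Qed.

Lemma wid_sum_gt0 : 0 < wid_sum fu a b.
Proof.
have [i wi_gt0] := wid_fu_gt0.
rewrite -/W W_sum (bigD1 i) //= ltr_pwDl //.
by apply: sumr_ge0 => j _; apply: w_ge0.
Qed.

Lemma sum_ref_weights : \sum_i (1 - w i / W) = n%:R - 1.
Proof.
rewrite sumrB sumr_const card_ord -mulr_suml -W_sum divff //.
exact: lt0r_neq0 wid_sum_gt0.
Qed.

(* A summand of width zero is constant, so the uniform formula also gives 0 there. *)
Lemma fu_refE i t : a i <= t <= b i ->
  fu_ref a b fu Flo i t = Num.max (L + (fu i t - lo i)) Flo - (1 - w i / W) * M.
Proof.
move=> tab; rewrite /fu_ref -/(w i) -/W -/L -/M -/(lo i) (addrC (fu i t - lo i)).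
case: ifP => // /negbT; rewrite -leNgt => wi_le0.
have wi0 : w i = 0 by apply/le_anti; rewrite wi_le0 w_ge0.
have /andP[lo_le le_hi] := fu_bounded _ _ tab.
have -> : fu i t = lo i by move: wi0 lo_le le_hi; rewrite /w /wid_on; lra.
by rewrite subrr addr0 wi0 mul0r subr0 mul1r subrr.
Qed.

Lemma sep_fu_ref_le x : in_box a b x ->
  sep (fu_ref a b fu Flo) x <= Num.max (sep fu x) Flo.
Proof.
move=> x_in; pose g i := fu i (x i) - lo i.
have g_ge0 i : 0 <= g i by rewrite subr_ge0; case/andP: (fu_bounded _ _ (x_in i)).
have sep_fuE : sep fu x = L + \sum_i g i.
  by rewrite /sep /L /lo_sum -big_split /=; apply: eq_bigr => i _; rewrite addrC subrK.
have size_enum : size (index_enum 'I_n) = n.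
  by rewrite /index_enum -enumT size_enum_ord.
have := sum_maxr_shift_le (index_enum 'I_n) g L Flo g_ge0.
rewrite size_enum -/M -sep_fuE.
rewrite /sep (eq_bigr _ (fun i _ => fu_refE _ _ (x_in i))) sumrB -mulr_suml.
rewrite sum_ref_weights mulrBl mul1r; lra.
Qed.

End LowerRefinement.

Lemma lo_onN {R : realType} (g : R -> R) (a b : R) :
  lo_on (fun t => - g t) a b = - hi_on g a b.
Proof.
rewrite /lo_on /hi_on /inf image_comp.
suff -> : -%R \o (fun t => - g t) = g by [].
by apply/funext => t /=; rewrite opprK.
Qed.

Lemma hi_onN {R : realType} (g : R -> R) (a b : R) :
  hi_on (fun t => - g t) a b = - lo_on g a b.
Proof. by rewrite /lo_on /hi_on /inf opprK image_comp. Qed.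

Lemma wid_onN {R : realType} (g : R -> R) (a b : R) :
  wid_on (fun t => - g t) a b = wid_on g a b.
Proof. rewrite /wid_on lo_onN hi_onN; lra. Qed.

Section Negation.
Local Set Implicit Arguments.
Variables (R : realType) (n : nat) (a b : 'I_n -> R) (g : 'I_n -> R -> R).

Lemma lo_sumN : lo_sum (fun i t => - g i t) a b = - hi_sum g a b.
Proof. by rewrite /lo_sum /hi_sum -sumrN; apply: eq_bigr => i _; apply: lo_onN. Qed.

Lemma hi_sumN : hi_sum (fun i t => - g i t) a b = - lo_sum g a b.
Proof. by rewrite /lo_sum /hi_sum -sumrN; apply: eq_bigr => i _; apply: hi_onN. Qed.

Lemma wid_sumN : wid_sum (fun i t => - g i t) a b = wid_sum g a b.
Proof. rewrite /wid_sum lo_sumN hi_sumN; lra. Qed.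

Lemma sepN x : sep (fun i t => - g i t) x = - sep g x.
Proof. by rewrite /sep sumrN. Qed.

Lemma fo_refE F i t : fo_ref a b g F i t = - fu_ref a b (fun i t => - g i t) (- F) i t.
Proof.
rewrite /fo_ref /fu_ref wid_onN wid_sumN lo_onN lo_sumN.
case: ifP => _; last by rewrite oppr0.
set hi := hi_on _ _ _; set H := hi_sum _ _ _.
have -> : - g i t - - hi - H = - (g i t - hi + H) by lra.
by rewrite -!oppr_min mulrN opprB opprK addrC.
Qed.

Lemma sep_fo_refE F x :
  sep (fo_ref a b g F) x = - sep (fu_ref a b (fun i t => - g i t) (- F)) x.
Proof. by rewrite /sep -sumrN; apply: eq_bigr => i _; rewrite fo_refE. Qed.

Lemma le_sep_fo_ref F : (forall i, a i <= b i) ->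
  (forall i t, a i <= t <= b i ->
    lo_on (g i) (a i) (b i) <= g i t <= hi_on (g i) (a i) (b i)) ->
  (exists i, 0 < wid_on (g i) (a i) (b i)) ->
  forall x, in_box a b x -> Num.min (sep g x) F <= sep (fo_ref a b g F) x.
Proof.
move=> ab g_bnd [j wj_gt0] x x_in.
have negg_bnd i t : a i <= t <= b i -> lo_on (fun t => - g i t) (a i) (b i)
    <= - g i t <= hi_on (fun t => - g i t) (a i) (b i).
  by move=> /g_bnd; rewrite lo_onN hi_onN !lerN2 andbC.
have negg_wid : exists i, 0 < wid_on (fun t => - g i t) (a i) (b i).
  by exists j; rewrite wid_onN.
have := sep_fu_ref_le (fun i t => - g i t) (- F) ab negg_bnd negg_wid x_in.
by rewrite sep_fo_refE sepN -oppr_min lerNr.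
Qed.

End Negation.

Theorem corollary1 (R : realType) (n : nat) (a b : 'I_n -> R)
  (f : ('I_n -> R) -> R) (fu fo : 'I_n -> R -> R) (Flo Fhi : R) :
  (forall i, a i <= b i) ->
  (forall i, {within `[a i, b i], continuous (fu i)}) ->
  (forall i, {within `[a i, b i], continuous (fo i)}) ->
  superposition_relaxation a b f fu fo ->
  (exists i, 0 < wid_on (fu i) (a i) (b i)) ->
  (exists i, 0 < wid_on (fo i) (a i) (b i)) ->
  Flo <= Fhi ->
  (forall x, in_box a b x -> Flo <= f x <= Fhi) ->
  superposition_relaxation a b f (fu_ref a b fu Flo) (fo_ref a b fo Fhi).
Proof.
move=> ab fu_cont fo_cont relax wid_fu wid_fo _ f_bnd x x_in.
have fu_bnd i := continuous_bounded_on (ab i) (fu_cont i).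
have fo_bnd i := continuous_bounded_on (ab i) (fo_cont i).
have [fu_le_f f_le_fo] := relax x x_in.
have /andP[Flo_le_f f_le_Fhi] := f_bnd x x_in.
split.
- apply: le_trans (sep_fu_ref_le fu Flo ab fu_bnd wid_fu x_in) _.
  by rewrite ge_max fu_le_f Flo_le_f.
- apply: le_trans _ (le_sep_fo_ref fo Fhi ab fo_bnd wid_fo x_in).
  by rewrite le_min f_le_fo f_le_Fhi.
Qed.
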